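(* Let $p$ be a prime, $\mathbb{C}_p$ the field of complex $p$-adic numbers with norm $|\cdot|_p$, $a,b,c\in\mathbb{C}_p$ with $b\neq0$, $c\neq ab$, $f(x)=\frac{x+a}{bx+c}$ for $x\neq\hat x:=-c/b$. Fix a square root $\sqrt{(c-1)^2+4ab}$ and let $x_{1}=\frac{1-c+\sqrt{(c-1)^2+4ab}}{2b}$, $x_2=\frac{1-c-\sqrt{(c-1)^2+4ab}}{2b}$ (the fixed points of $f$). Assume $$\left|\frac{c-ab}{(bx_1+c)^2}\right|_p<1\qquad\text{and}\qquad\left|\frac{b}{bx_1+c}\right|_p<1.$$ Then the basin of attraction of $x_1$ is $$A(x_1)=\mathbb{C}_p\setminus\{\hat x,x_2\}.$$
   Context: For a fixed point $x_0$ of $f$, its basin of attraction is $A(x_0)=\{y\in\mathbb{C}_p: y_n\to x_0 \text{ as } n\to\infty\}$, where $y_n=f^n(y)$ is the $n$-th iterate of $y$ under $f$.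
   Formalization: The claim covers only points y whose iterates $y_n$ all differ from $\hat x$: for such y, y ∈ A(x₁) holds exactly when y ≠ x₂. Apart from conventions, each condition added here is assumed in the paper as well or is needed for the statement above to hold. *)

From mathcomp Require Import all_boot all_order all_algebra.
From mathcomp Require Import reals.
Set Implicit Arguments. Unset Strict Implicit. Unset Printing Implicit Defensive.
Import Order.TTheory GRing.Theory Num.Theory.
Local Open Scope ring_scope.

(* A "C_p-like" field: an algebraically closed field K of characteristic 0,
   equipped with a non-archimedean absolute value abs : K -> R extending the
   p-adic absolute value (|p| = 1/p), complete for abs. *)
Record is_padic_abs (R : realType) (K : fieldType) (p : nat) (abs : K -> R)
  : Prop := {
  abs_ge0 : forall x, 0 <= abs x;
  abs_eq0 : forall x, abs x = 0 <-> x = 0;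
  absM : forall x y, abs (x * y) = abs x * abs y;
  abs_ultra : forall x y, abs (x + y) <= Num.max (abs x) (abs y);
  abs_p : abs (p%:R) = (p%:R)^-1
}.

Definition char0 (K : fieldType) : Prop := forall n : nat, (n.+1)%:R != 0 :> K.

Definition cvg_abs (R : realType) (K : fieldType) (abs : K -> R)
  (u : nat -> K) (l : K) : Prop :=
  forall eps : R, 0 < eps -> exists N : nat, forall n : nat, (N <= n)%N ->
    abs (u n - l) < eps.

Definition cauchy_abs (R : realType) (K : fieldType) (abs : K -> R)
  (u : nat -> K) : Prop :=
  forall eps : R, 0 < eps -> exists N : nat, forall m n : nat,
    (N <= m)%N -> (N <= n)%N -> abs (u m - u n) < eps.

Definition complete_abs (R : realType) (K : fieldType) (abs : K -> R) : Prop :=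
  forall u, cauchy_abs abs u -> exists l, cvg_abs abs u l.

(* f(x) = (x+a)/(bx+c); only meaningful for x <> -c/b *)
Definition mobius (K : fieldType) (a b c : K) (x : K) : K := (x + a) / (b * x + c).

Definition in_basin (R : realType) (K : fieldType) (abs : K -> R)
  (f : K -> K) (xhat x0 y : K) : Prop :=
  (forall n : nat, iter n f y != xhat) /\ cvg_abs abs (fun n => iter n f y) x0.

From mathcomp Require Import all_boot all_order all_algebra.
From mathcomp Require Import reals classical_sets topology normedtype sequences.
From mathcomp Require Import ring lra.
Set Implicit Arguments. Unset Strict Implicit. Unset Printing Implicit Defensive.
Import Order.TTheory GRing.Theory Num.Theory numFieldNormedType.Exports.
Local Open Scope ring_scope.
Local Open Scope classical_set_scope.

(* Both fixed points t of f satisfy f x - t = (1 - b t)(x - t)/(b x + c), so along an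
   orbit the cross ratio (y_n - x1)/(y_n - x2) is multiplied at each step by
   lambda = (1 - b x1)/(1 - b x2) = (c - a b)/(b x1 + c)^2, of absolute value < 1.
   If y <> x2 then y_n - x1 = r lambda^n (y_n - x2), and the ultrametric inequality
   |y_n - x2| <= max(|y_n - x1|, |x1 - x2|) gives |y_n - x1| <= |r lambda^n| |x1 - x2|
   once |r lambda^n| < 1.  The point x2 is fixed and differs from x1, since x1 = x2
   would force lambda = 1. *)

Lemma geometric_eventually_lt (R : realType) (C q eps : R) :
  0 <= q -> q < 1 -> 0 < eps -> exists N, forall n, (N <= n)%N -> C * q ^+ n < eps.
Proof.
move=> q_ge0 q_lt1 eps_gt0.
have /cvgr_dist_lt/(_ _ eps_gt0) : geometric C q @ \oo --> 0.
  by apply: cvg_geometric; rewrite ger0_norm.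
case=> N _ HN; exists N => n /HN /=.
by rewrite sub0r normrN; apply: le_lt_trans; apply: ler_norm.
Qed.

Section Mobius.
Variables (K : fieldType) (a b c : K).
Local Notation f := (mobius a b c).

Lemma mobius_denom_neq0 x : b != 0 -> x != - c / b -> b * x + c != 0.
Proof.
move=> b_neq0; apply: contra => /eqP bxc0; apply/eqP.
have -> : c = - (b * x) by apply/eqP; rewrite -addr_eq0 addrC bxc0.
by field.
Qed.

Lemma quadratic_root_fixed e t : 2 != 0 :> K -> b != 0 ->
  e ^+ 2 = (c - 1) ^+ 2 + 4 * a * b -> t = (1 - c + e) / (2 * b) ->
  b * t ^+ 2 + (c - 1) * t = a.
Proof.
move=> two_neq0 b_neq0 e_sq ->.
have four_neq0 : 4 != 0 :> K by have := mulf_neq0 two_neq0 two_neq0; rewrite -natrM.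
have -> : a = (e ^+ 2 - (c - 1) ^+ 2) / (4 * b).
  by rewrite e_sq; field; rewrite b_neq0 four_neq0.
by field; rewrite b_neq0 four_neq0 two_neq0.
Qed.

Lemma mobius_subr_fixed t x : b * t ^+ 2 + (c - 1) * t = a -> b * x + c != 0 ->
  f x - t = (1 - b * t) * (x - t) / (b * x + c).
Proof. by move=> <- denom_neq0; rewrite /mobius; field. Qed.

Lemma mobius_fixed_factor t : b * t ^+ 2 + (c - 1) * t = a ->
  (b * t + c) * (1 - b * t) = c - a * b.
Proof. by move=> <-; ring. Qed.

Lemma iter_mobius_cross_ratio t1 t2 y :
    b * t1 ^+ 2 + (c - 1) * t1 = a -> b * t2 ^+ 2 + (c - 1) * t2 = a ->
    1 - b * t2 != 0 -> y != t2 -> (forall n, b * iter n f y + c != 0) ->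
  forall n, iter n f y - t1 =
    (y - t1) / (y - t2) * ((1 - b * t1) / (1 - b * t2)) ^+ n * (iter n f y - t2).
Proof.
move=> t1_fixed t2_fixed bt2_neq0 y_neq_t2 orbit_denom; elim=> [|n IHn].
  by rewrite expr0 mulr1 divfK // subr_eq0.
rewrite iterS (mobius_subr_fixed t1_fixed (orbit_denom n))
  (mobius_subr_fixed t2_fixed (orbit_denom n)) IHn exprSr.
by field; rewrite orbit_denom bt2_neq0 subr_eq0.
Qed.

Lemma iter_mobius_fixed t n : b * t ^+ 2 + (c - 1) * t = a -> b * t + c != 0 ->
  iter n f t = t.
Proof.
move=> t_fixed denom_neq0; apply: iter_fix; apply/eqP.
by rewrite -subr_eq0 (mobius_subr_fixed t_fixed denom_neq0) subrr mulr0 mul0r.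
Qed.

End Mobius.

Section UltrametricAbs.
Variables (R : realType) (K : fieldType) (p : nat) (abs : K -> R).
Hypothesis habs : is_padic_abs p abs.

Lemma abs1 : abs 1 = 1.
Proof.
have abs1_neq0 : abs 1 != 0 by apply/eqP => /(abs_eq0 habs)/eqP; rewrite oner_eq0.
by apply: (mulfI abs1_neq0); rewrite -(absM habs) !mulr1.
Qed.

Lemma abs_exprn (x : K) n : abs (x ^+ n) = abs x ^+ n.
Proof. by elim: n => [|n IHn]; rewrite ?abs1 // !exprS (absM habs) IHn. Qed.

Lemma abs_gt0 (x : K) : x != 0 -> 0 < abs x.
Proof.
move=> x_neq0; rewrite lt_def (abs_ge0 habs) andbT.
by apply: contra x_neq0 => /eqP/(abs_eq0 habs)->.
Qed.

Lemma cvg_abs_cst_eq (x l : K) : cvg_abs abs (fun=> x) l -> x = l.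
Proof.
move=> cvg_x; apply/eqP; rewrite -subr_eq0; apply: contraT => /abs_gt0 dist_gt0.
by have [N /(_ N (leqnn N))] := cvg_x _ dist_gt0; rewrite ltxx.
Qed.

Lemma cvg_abs_of_ratio (u : nat -> K) (l m : K) (C q : R) :
  0 <= C -> 0 <= q -> q < 1 ->
  (forall n, abs (u n - l) = C * q ^+ n * abs (u n - m)) -> cvg_abs abs u l.
Proof.
move=> C_ge0 q_ge0 q_lt1 ratio eps eps_gt0.
set D := abs (l - m).
have [N1 HN1] := geometric_eventually_lt C q_ge0 q_lt1 ltr01.
have [N2 HN2] := geometric_eventually_lt (C * D) q_ge0 q_lt1 eps_gt0.
exists (maxn N1 N2) => n; rewrite geq_max => /andP[/HN1 rho_lt1 /HN2].
rewrite mulrAC; have := ratio n; set rho := C * q ^+ n in rho_lt1 * => ratio_n eps_bound.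
have rho_ge0 : 0 <= rho by rewrite mulr_ge0 ?exprn_ge0.
have ultra : abs (u n - m) <= Num.max (abs (u n - l)) D.
  have -> : u n - m = (u n - l) + (l - m) by rewrite addrA subrK.
  exact: (abs_ultra habs).
have abs_m_ge0 := abs_ge0 habs (u n - m).
have D_ge0 : 0 <= D := abs_ge0 habs (l - m).
suff close : abs (u n - l) <= rho * D by exact: le_lt_trans eps_bound.
have [l_le_D | D_lt_l] := leP (abs (u n - l)) D.
  by rewrite max_r // in ultra; rewrite ratio_n ler_wpM2l.
(* |u_n - m| <= |u_n - l| = rho |u_n - m| with rho < 1 forces |u_n - m| = 0 *)
rewrite (max_l (ltW D_lt_l)) ratio_n in ultra.
have abs_m_le0 : abs (u n - m) <= 0 by nra.
by rewrite ratio_n; apply: le_trans (mulr_ge0 rho_ge0 D_ge0); rewrite mulr_ge0_le0.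
Qed.

Lemma cvg_iter_mobius_fixed (a b c t1 t2 y : K) :
    b * t1 ^+ 2 + (c - 1) * t1 = a -> b * t2 ^+ 2 + (c - 1) * t2 = a ->
    1 - b * t2 != 0 -> abs ((1 - b * t1) / (1 - b * t2)) < 1 -> y != t2 ->
    (forall n, b * iter n (mobius a b c) y + c != 0) ->
  cvg_abs abs (fun n => iter n (mobius a b c) y) t1.
Proof.
move=> t1_fixed t2_fixed t2_factor_neq0 lambda_lt1 y_neq_t2 orbit_denom_neq0.
apply: (cvg_abs_of_ratio (C := abs ((y - t1) / (y - t2))))
  (abs_ge0 habs _) (abs_ge0 habs _) lambda_lt1 _ => n.
rewrite (iter_mobius_cross_ratio t1_fixed t2_fixed t2_factor_neq0 y_neq_t2 orbit_denom_neq0).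
by rewrite (absM habs _ (_ - t2)) (absM habs _ (_ ^+ n)) abs_exprn.
Qed.

End UltrametricAbs.

Theorem theorem3p11 (R : realType) (K : closedFieldType) (p : nat)
  (abs : K -> R) (hp : prime p) (habs : @is_padic_abs R K p abs)
  (hc0 : char0 K) (hcompl : complete_abs abs)
  (a b c s : K) (hb : b != 0) (hcab : c != a * b)
  (hs : s ^+ 2 = (c - 1) ^+ 2 + 4 * a * b) :
  let x1 := (1 - c + s) / (2 * b) in
  let x2 := (1 - c - s) / (2 * b) in
  let xhat := - c / b in
  abs ((c - a * b) / (b * x1 + c) ^+ 2) < 1 ->
  abs (b / (b * x1 + c)) < 1 ->
  forall y : K, (forall n : nat, iter n (mobius a b c) y != xhat) ->
    (in_basin abs (mobius a b c) xhat x1 y <-> y != x2).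
Proof.
move=> x1 x2 xhat lambda_lt1 _ y orbit_regular.
have two_neq0 : 2 != 0 :> K := hc0 1.
have x1_fixed := quadratic_root_fixed two_neq0 hb hs (erefl x1).
have x2_fixed : b * x2 ^+ 2 + (c - 1) * x2 = a.
  by apply: quadratic_root_fixed two_neq0 hb _ (erefl _); rewrite sqrrN.
have roots_sum : 1 - b * x2 = b * x1 + c by rewrite /x1 /x2; field; rewrite hb two_neq0.
have x1_denom_neq0 : b * x1 + c != 0.
  apply: contraNneq hcab => x1_pole.
  by rewrite -subr_eq0 -(mobius_fixed_factor x1_fixed) x1_pole mul0r.
have lambdaE : (c - a * b) / (b * x1 + c) ^+ 2 = (1 - b * x1) / (1 - b * x2).
  by rewrite -(mobius_fixed_factor x1_fixed) roots_sum; field.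
rewrite lambdaE in lambda_lt1.
have x2_factor_neq0 : 1 - b * x2 != 0 by rewrite roots_sum.
split=> [[_ cvg_x1] | y_neq_x2].
  apply: contraTneq lambda_lt1 => y_x2.
  have x2_denom_neq0 : b * x2 + c != 0.
    by rewrite -y_x2; exact: mobius_denom_neq0 hb (orbit_regular 0).
  have x2_x1 : x2 = x1.
    apply: (cvg_abs_cst_eq habs) => eps /cvg_x1[N HN]; exists N => n /HN.
    by rewrite y_x2 iter_mobius_fixed.
  by rewrite -x2_x1 divff // (abs1 habs) ltxx.
split=> //; apply: (cvg_iter_mobius_fixed habs x1_fixed x2_fixed) => // n.
exact: mobius_denom_neq0 hb (orbit_regular n).
Qed.
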